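(* Let $n\ge1$ and radii $R_1,\dots,R_n>0$. For a Kaluza–Klein mode $\underline m=(\underline m_1,\dots,\underline m_n)\in\mathbb{Z}_{\ge0}^n\setminus\{0\}$ set $v_i=2\pi\underline m_i/R_i$ and $|v|^2=\sum_i v_i^2$. In the compactified Lagrangian (see context), the quadratic (coupling-independent) part for the mode $\underline m$ gives: the vector field $A^{(\underline m)a}_\mu$ squared mass $|v|^2$; and the $n$ scalars $A^{(\underline m)a}_{\bar\mu}$ ($\bar\mu=5,\dots,4+n$) the mass matrix $M=|v|^2 I_n-vv^{T}$, which is real symmetric with eigenvalue $0$ of multiplicity one (eigenvector $v$) and eigenvalue $|v|^2$ of multiplicity $n-1$. Consequently, organizing modes into KK towers according to which Fourier indices are nonzero (one tower per nonempty subset of $\{1,\dots,n\}$ for each field type), the compactified theory contains one massless gauge vector field $A^{(0,\dots,0)a}_\mu$, $2^n-1$ KK towers of massive vector fields, $2^n-1$ KK towers of massless (pseudo-Goldstone) scalar fields, and $(2^n-1)(n-1)$ KK towers of massive scalar fields, each massive field of mode $\underline m$ having squared mass $\sum_i(2\pi\underline m_i/R_i)^2$.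
   Context: Setting: pure $SU(N)$ Yang–Mills theory on $\mathcal{M}^4\times(S^1/Z_2)^n$ with Lagrangian $-\tfrac14\mathcal{F}^a_{MN}\mathcal{F}^{MN}_a$, $\mathcal{F}^a_{MN}=\partial_M\mathcal{A}^a_N-\partial_N\mathcal{A}^a_M+g_mf^{abc}\mathcal{A}^b_M\mathcal{A}^c_N$, fields periodic in $y^i$ with period $R_i$, $\mathcal{A}_\mu$ even and $\mathcal{A}_{\bar\mu}$ odd under $y\to-y$, expanded as $\mathcal{A}^a_\mu=P^{-1/2}A^{(0)a}_\mu+(2/P)^{1/2}\sum'A^{(\underline m)a}_\mu\cos\theta_{\underline m}$, $\mathcal{A}^a_{\bar\mu}=(2/P)^{1/2}\sum'A^{(\underline m)a}_{\bar\mu}\sin\theta_{\underline m}$ with $\theta_{\underline m}=2\pi\sum_i\underline m_iy^i/R_i$, $P=\prod R_i$, $\sum'$ over $\mathbb{Z}_{\ge0}^n\setminus\{0\}$. The compactified Lagrangian is the integral of the Lagrangian over $y\in\prod_i[0,R_i]$, a function of the four-dimensional fields $A^{(0)a}_\mu$, $A^{(\underline m)a}_\mu$, $A^{(\underline m)a}_{\bar\mu}$. Extra dimensions are spacelike. Massless scalars are called pseudo-Goldstone bosons. *)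

From HB Require Import structures.
From mathcomp Require Import all_boot all_order all_algebra.
From mathcomp Require Import all_classical all_reals all_analysis.
Set Implicit Arguments. Unset Strict Implicit. Unset Printing Implicit Defensive.
Import Order.TTheory GRing.Theory Num.Theory.
Import numFieldNormedType.Exports.
Local Open Scope classical_set_scope.
Local Open Scope ring_scope.

Section KK.
Variable R : realType.

Definition Pvol (n : nat) (Rad : 'I_n -> R) : R := \prod_(i < n) Rad i.

Definition theta (n : nat) (Rad : 'I_n -> R) (m : 'I_n -> nat) (y : 'rV[R]_n) : R :=
  2 * pi * \sum_(i < n) (m i)%:R * y 0 i / Rad i.

Definition kkv (n : nat) (Rad : 'I_n -> R) (m : 'I_n -> nat) : 'rV[R]_n :=
  \row_i (2 * pi * (m i)%:R / Rad i).

Definition vnorm2 (n : nat) (v : 'rV[R]_n) : R := \sum_(i < n) v 0 i ^+ 2.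

Definition mass_matrix (n : nat) (v : 'rV[R]_n) : 'M[R]_n :=
  (vnorm2 v)%:M - v^T *m v.

(* metric of M^4 x (S^1/Z_2)^n, signature (+,-,...,-): extra dims spacelike.
   Index M : 'I_(4+n); M < 4 are the 4d indices mu, M = 4+i the extra ones. *)
Definition eta (n : nat) (M : 'I_(4 + n)) : R := if (M == 0 :> nat) then 1 else -1.

Definition mink (n : nat) (a : 'rV[R]_4) : R :=
  \sum_(mu < 4) eta (lshift n mu) * a 0 mu ^+ 2.

(* partial derivative d_M of a field configuration that does not depend on
   the 4d coordinates x (mass terms = terms without 4d derivatives) *)
Definition partial (n : nat) (M : 'I_(4 + n)) (f : 'rV[R]_n -> R) (y : 'rV[R]_n) : R :=
  match fintype.split M with
  | inl _ => 0
  | inr i => derive f y (delta_mx 0 i : 'rV[R]_n)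
  end.

(* coupling-independent (g_m = 0) field strength, colour by colour *)
Definition fstrength (n : nat) (A : 'I_(4 + n) -> 'rV[R]_n -> R)
  (M N : 'I_(4 + n)) (y : 'rV[R]_n) : R :=
  partial M (A N) y - partial N (A M) y.

Definition Ldensity (n d : nat) (A : 'I_d -> 'I_(4 + n) -> 'rV[R]_n -> R)
  (y : 'rV[R]_n) : R :=
  - (1 / 4) * \sum_(c < d) \sum_(M < 4 + n) \sum_(N < 4 + n)
      eta M * eta N * fstrength (A c) M N y ^+ 2.

(* integral over y in prod_i [0, R_i], as an iterated Lebesgue integral *)
Definition upd (n : nat) (y : 'rV[R]_n) (i : 'I_n) (t : R) : 'rV[R]_n :=
  \row_j (if j == i then t else y 0 j).

Fixpoint box_int_seq (n : nat) (Rad : 'I_n -> R) (s : seq 'I_n)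
  (f : 'rV[R]_n -> R) (y : 'rV[R]_n) : R :=
  match s with
  | [::] => f y
  | i :: s' => Rintegral (@lebesgue_measure R) `[0, Rad i]%classic
                 (fun t => box_int_seq Rad s' f (upd y i t))
  end.

Definition box_int (n : nat) (Rad : 'I_n -> R) (f : 'rV[R]_n -> R) : R :=
  box_int_seq Rad (enum 'I_n) f 0.

(* configuration where only the KK mode m (nonzero) is excited:
   A^a_mu = (2/P)^{1/2} A^{(m)a}_mu cos theta_m,
   A^a_{4+i} = (2/P)^{1/2} A^{(m)a}_{4+i} sin theta_m *)
Definition kk_field (n d : nat) (Rad : 'I_n -> R) (m : 'I_n -> nat)
  (a : 'I_d -> 'rV[R]_4) (b : 'I_d -> 'rV[R]_n)
  (c : 'I_d) (M : 'I_(4 + n)) (y : 'rV[R]_n) : R :=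
  match fintype.split M with
  | inl mu => Num.sqrt (2 / Pvol Rad) * a c 0 mu * cos (theta Rad m y)
  | inr i => Num.sqrt (2 / Pvol Rad) * b c 0 i * sin (theta Rad m y)
  end.

(* configuration where only the zero mode is excited:
   A^a_mu = P^{-1/2} A^{(0)a}_mu, A^a_{4+i} = 0 *)
Definition zero_field (n d : nat) (Rad : 'I_n -> R) (a : 'I_d -> 'rV[R]_4)
  (c : 'I_d) (M : 'I_(4 + n)) (y : 'rV[R]_n) : R :=
  match fintype.split M with
  | inl mu => (Num.sqrt (Pvol Rad))^-1 * a c 0 mu
  | inr _ => 0
  end.

(* mass part (quadratic, no 4d derivatives) of the compactified Lagrangian *)
Definition Lmass_mode (n d : nat) (Rad : 'I_n -> R) (m : 'I_n -> nat)
  (a : 'I_d -> 'rV[R]_4) (b : 'I_d -> 'rV[R]_n) : R :=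
  box_int Rad (Ldensity (kk_field Rad m a b)).

Definition Lmass_zero (n d : nat) (Rad : 'I_n -> R) (a : 'I_d -> 'rV[R]_4) : R :=
  box_int Rad (Ldensity (zero_field Rad a)).

(* the KK tower labelled by a nonempty S : modes whose nonzero indices are S *)
Definition in_tower (n : nat) (S : {set 'I_n}) (m : 'I_n -> nat) : bool :=
  [forall i, (i \in S) == (m i != 0%N)].

End KK.

(* For a single Kaluza-Klein mode every component of the field is a constant
   amplitude times cos theta or sin theta, with theta linear in y.  At g_m = 0
   the field strength has no four-dimensional derivatives, so the Lagrangian
   density is a constant plus a multiple of cos (2 theta).  Along each direction
   with m_i != 0, 2 theta makes 2 m_i full turns over [0, R_i], so the
   oscillating part integrates to zero and the volume P cancels the 2/P of the
   normalisation.  The constant part is |v|^2 a.a for the vectors and, by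
   Lagrange's identity, b (|v|^2 I - v^T v) b^T for the scalars.  This mass
   matrix is a rank-one perturbation of |v|^2 I killing v, whence its
   characteristic polynomial (matrix determinant lemma) and eigenspaces.
   The zero mode is constant in y, so its field strength vanishes. *)

From Pilot Require Import Defs.
From HB Require Import structures.
From mathcomp Require Import all_boot all_order all_algebra.
From mathcomp Require Import all_classical all_reals all_analysis.
From mathcomp Require Import zify ring.
Import Order.TTheory GRing.Theory Num.Theory.
Import numFieldNormedType.Exports.
Local Open Scope ring_scope.

Set Implicit Arguments. Unset Strict Implicit. Unset Printing Implicit Defensive.

(* Matrix determinant lemma, by computing the determinant of
   [[1, w], [-u^T, t]] through its two block triangular factorisations. *)
Lemma det_scalar_add_rank1 (R : idomainType) n (t : R) (u w : 'rV[R]_n.+1) :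
  t != 0 -> \det (t%:M + u^T *m w) = t ^+ n * (t + (w *m u^T) 0 0).
Proof.
move=> t_neq0.
pose B := block_mx (1 : 'M[R]_1) w (- u^T) (t%:M : 'M[R]_n.+1).
have B_LU : B = block_mx 1 0 (- u^T) 1 *m block_mx 1 w 0 (t%:M + u^T *m w).
  rewrite mulmx_block /B !mul1mx !mul0mx !mulmx1 !addr0.
  by rewrite mulNmx addrC -addrA subrr addr0.
have B_UL : B *m block_mx t%:M 0 u^T 1 = block_mx (t%:M + w *m u^T) w 0 t%:M.
  rewrite mulmx_block /B !mul1mx !mulmx0 !mulmx1 !add0r.
  by rewrite mul_mx_scalar mul_scalar_mx scalerN addNr.
have := congr1 determinant B_UL.
rewrite det_mulmx B_LU det_mulmx !(det_lblock, det_ublock) !det1 !mul1r mulr1.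
rewrite !det_scalar det_mx11 !mxE eqxx mulr1n expr1 => detE.
apply: (mulIf t_neq0); rewrite detE exprSr mulrA; congr (_ * _); exact: mulrC.
Qed.

Lemma mul_row_tr (R : comNzRingType) n (v : 'rV[R]_n) :
  v *m v^T = (\sum_i v 0 i ^+ 2)%:M.
Proof.
apply/matrixP => i j; rewrite !ord1 !mxE eqxx mulr1n.
by apply: eq_bigr => k _; rewrite !mxE expr2.
Qed.

(* [perp_mx v] is [|v|^2] times the orthogonal projection onto [v^perp];
   [mass_matrix] is its real instance. *)
Definition perp_mx (R : comNzRingType) n (v : 'rV[R]_n) : 'M[R]_n :=
  (\sum_i v 0 i ^+ 2)%:M - v^T *m v.

Lemma char_poly_perp_mx (F : fieldType) n (v : 'rV[F]_n) : (0 < n)%N ->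
  char_poly (perp_mx v) = 'X * ('X - (\sum_i v 0 i ^+ 2)%:P) ^+ (n - 1).
Proof.
case: n v => // k u _; rewrite subSS subn0.
set c := \sum_i _.
pose up := map_mx polyC u.
have char_mxE : char_poly_mx (perp_mx u) = ('X - c%:P)%:M + up^T *m up.
  apply/matrixP => i j; rewrite !mxE !big_ord1 !mxE polyCB polyCM polyCMn.
  by case: (i == j); rewrite /= ?mulr1n ?mulr0n ?subr0 ?add0r ?sub0r ?opprB
    ?addrA ?opprK // addrAC.
rewrite /char_poly char_mxE det_scalar_add_rank1 ?polyXsubC_eq0 // mulrC.
congr (_ * _); rewrite mul_row_tr mxE eqxx mulr1n.
by rewrite (eq_bigr (fun i => (u 0 i ^+ 2)%:P)) -?rmorph_sum ?subrK // => i _;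
  rewrite mxE rmorphXn.
Qed.

Section PerpMatrix.
Variables (F : fieldType) (n : nat) (v : 'rV[F]_n).
Let c := \sum_i v 0 i ^+ 2.

Lemma perp_mx_tr : (perp_mx v)^T = perp_mx v.
Proof. by rewrite /perp_mx linearB /= tr_scalar_mx trmx_mul trmxK. Qed.

Lemma perp_mx_mul_tr : perp_mx v *m v^T = 0.
Proof.
by rewrite /perp_mx mulmxBl -mulmxA mul_row_tr mul_scalar_mx mul_mx_scalar subrr.
Qed.

Hypothesis c_neq0 : c != 0.

Lemma row_neq0_of_norm2 : v != 0.
Proof.
by apply: contra c_neq0; rewrite /c => /eqP ->; rewrite big1 // => i _; rewrite mxE expr0n.
Qed.

Lemma mxrank_tr_mul_row : \rank (v^T *m v) = 1%N.
Proof.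
apply/eqP; rewrite eqn_leq (leq_trans (mxrankM_maxr _ _) (rank_leq_row _)) /=.
rewrite lt0n mxrank_eq0; apply: contra row_neq0_of_norm2 => /eqP vv0.
apply/eqP/rowP => i; have /eqP := congr1 (fun A : 'M[F]_n => A i i) vv0.
by rewrite !mxE big_ord1 !mxE mulf_eq0 orbb => /eqP ->.
Qed.

Lemma mxrank_perp_mx : \rank (perp_mx v) = n.-1.
Proof.
have le_rank := mulmx0_rank_max perp_mx_mul_tr.
rewrite mxrank_tr rank_rV row_neq0_of_norm2 addn1 in le_rank.
have ge_rank : (\rank (c%:M : 'M[F]_n) <= \rank (perp_mx v) + \rank (v^T *m v))%N.
  by rewrite -{1}(subrK (v^T *m v) c%:M); exact: mxrank_add.
rewrite -scalemx1 mxrank_scale_nz // mxrank1 mxrank_tr_mul_row in ge_rank.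
lia.
Qed.

Lemma mxrank_eigenspace_perp_mx0 : (0 < n)%N -> \rank (eigenspace (perp_mx v) 0) = 1%N.
Proof.
move=> n_gt0; rewrite /eigenspace mxrank_ker raddf0 subr0 mxrank_perp_mx.
lia.
Qed.

Lemma mxrank_eigenspace_perp_mx_norm2 :
  \rank (eigenspace (perp_mx v) c) = (n - 1)%N.
Proof.
by rewrite /eigenspace mxrank_ker /perp_mx addrC addKr mxrank_opp mxrank_tr_mul_row.
Qed.
End PerpMatrix.

Section AffineTrig.
Variable R : realType.
Local Open Scope classical_set_scope.

Lemma is_derive_affine (a k x : R) : is_derive x 1 (fun t : R => a + k * t) k.
Proof. by apply: is_derive_eq; rewrite add0r mul1r [k%:A]mulr1. Qed.

Lemma is_derive_cos_affine (a k x : R) :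
  is_derive x 1 (fun t : R => cos (a + k * t)) (- sin (a + k * x) * k).
Proof. exact/(is_derive1_comp (f := cos))/is_derive_affine. Qed.

Lemma is_derive_sin_affine (a k x : R) :
  is_derive x 1 (fun t : R => sin (a + k * t)) (cos (a + k * x) * k).
Proof. exact/(is_derive1_comp (f := sin))/is_derive_affine. Qed.

Lemma continuous_cos_affine (a k : R) : continuous (fun t : R => cos (a + k * t)).
Proof.
move=> x; apply/differentiable_continuous/derivable1_diffP.
by have [] := is_derive_cos_affine a k x.
Qed.

Lemma Rintegral_itv0_cst (r C : R) : 0 <= r ->
  \int[lebesgue_measure]_(t in `[0, r]) C = C * r.
Proof.
move=> r_ge0; rewrite Rintegral_cst //= lebesgue_measure_itv /= lte_fin.
by case: ltgtP r_ge0 => //= [_ _|<- _]; rewrite ?subr0 ?mulr0.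
Qed.

Lemma Rintegral_cos_affine (a k r : R) : 0 < r -> k != 0 ->
  \int[lebesgue_measure]_(t in `[0, r]) cos (a + k * t) =
  (sin (a + k * r) - sin a) / k.
Proof.
move=> r_gt0 k_neq0.
pose F t := k^-1 * sin (a + k * t).
have F'E (x : R) : is_derive x 1 F (cos (a + k * x)).
  apply: is_derive_eq (is_deriveZ k^-1 (is_derive_sin_affine a k x)) _.
  by rewrite -[_ *: _]/(k^-1 * _) mulrCA mulVf // mulr1.
have F_cont : continuous F.
  by move=> x; apply/differentiable_continuous/derivable1_diffP; have [] := F'E x.
have := @continuous_FTC2 R (fun t => cos (a + k * t)) F 0 r r_gt0.
rewrite /Rintegral => ->.
- by rewrite -EFinB /= /F mulr0 addr0 mulrBl !(mulrC _ k^-1).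
- by apply: continuous_in_subspaceT => x _; exact: continuous_cos_affine.
- split; [by move=> x _; have [] := F'E x
         | exact: cvg_at_right_filter (F_cont 0)
         | exact: cvg_at_left_filter (F_cont r)].
- by move=> x _; rewrite derive1E; have [] := F'E x.
Qed.

Lemma Rintegral_cos_affine_periods (a k r : R) (N : nat) :
  0 < r -> (0 < N)%N -> k * r = pi *+ 2 *+ N ->
  \int[lebesgue_measure]_(t in `[0, r]) cos (a + k * t) = 0.
Proof.
move=> r_gt0 N_gt0 krE.
have k_neq0 : k != 0.
  apply: contraTneq N_gt0 => k0; move: krE; rewrite k0 mul0r => /esym/eqP.
  by rewrite -mulrnA mulrn_eq0 (gt_eqF (pi_gt0 R)) orbF muln_eq0 /= -eqn0Ngt.
by rewrite Rintegral_cos_affine // krE periodicn ?subrr ?mul0r //; exact: sinD2pi.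
Qed.

Lemma Rintegral_cst_add_cos_affine (a k r C D : R) : 0 <= r ->
  \int[lebesgue_measure]_(t in `[0, r]) (C + D * cos (a + k * t)) =
  C * r + D * \int[lebesgue_measure]_(t in `[0, r]) cos (a + k * t).
Proof.
have integrable_itv (f : R -> R) : continuous f ->
    lebesgue_measure.-integrable `[0, r] (EFin \o f).
  move=> f_cont; apply: continuous_compact_integrable; first exact: segment_compact.
  by apply: continuous_in_subspaceT => x _; exact: f_cont.
move=> r_ge0; rewrite RintegralD //; last 2 first.
- exact/integrable_itv/cst_continuous.
- apply/integrable_itv => x; apply: continuousM; first exact: cst_continuous.
  exact: continuous_cos_affine.
by rewrite Rintegral_itv0_cst // RintegralZl //; exact/integrable_itv/continuous_cos_affine.
Qed.
End AffineTrig.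

Section ModeIntegral.
Variables (R : realType) (n : nat) (Rad : 'I_n -> R) (m : 'I_n -> nat).

Lemma theta_shift (y : 'rV[R]_n) i h :
  theta Rad m (h *: delta_mx 0 i + y) = theta Rad m y + h * kkv Rad m 0 i.
Proof.
rewrite /theta (bigD1 i) //= [in RHS](bigD1 i) //= !mxE !eqxx mulr1n mulr1.
rewrite (eq_bigr (fun j => (m j)%:R * y 0 j / Rad j)); last first.
  by move=> j /negbTE ji; rewrite !mxE ji andbF mulr0 add0r.
ring.
Qed.

Lemma upd_shift (y : 'rV[R]_n) i t : upd y i t = (t - y 0 i) *: delta_mx 0 i + y.
Proof.
apply/rowP => j; rewrite !mxE eqxx /= eq_sym.
by case: eqP => [->|_]; rewrite ?mulr1 ?subrK // mulr0 add0r.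
Qed.

Hypothesis Rad_gt0 : forall i, 0 < Rad i.

(* Along a direction with [m i != 0], [2 theta] runs through [2 m i] full
   periods over [0, Rad i], so the oscillating part integrates to zero. *)
Lemma box_int_seq_cst_add_cos2theta s C D (y : 'rV[R]_n) :
  box_int_seq Rad s (fun y => C + D * cos (2 * theta Rad m y)) y =
  \prod_(i <- s) Rad i *
    (C + D * (if all (fun i => m i == 0%N) s then cos (2 * theta Rad m y) else 0)).
Proof.
elim: s y => [|i s IHs] y /=; first by rewrite big_nil mul1r.
rewrite big_cons; under eq_Rintegral do rewrite IHs.
have Ri_ge0 := ltW (Rad_gt0 i).
case: (all _ s); last by rewrite andbF Rintegral_itv0_cst // mulrC mulrA.
have thetaE t : 2 * theta Rad m (upd y i t) =
    (2 * theta Rad m y - 2 * y 0 i * kkv Rad m 0 i) + 2 * kkv Rad m 0 i * t.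
  by rewrite upd_shift theta_shift; ring.
under eq_Rintegral => t _ do rewrite thetaE mulrDr mulrA.
rewrite Rintegral_cst_add_cos_affine //.
have [mi0|mi_neq0] /= := eqVneq (m i) 0%N.
  have -> : kkv Rad m 0 i = 0 by rewrite /kkv mxE mi0 mulr0 mul0r.
  rewrite !mulr0 subr0; under eq_Rintegral do rewrite mul0r addr0.
  by rewrite Rintegral_itv0_cst //; ring.
have N_gt0 : (0 < m i * 2)%N by rewrite muln_gt0 lt0n mi_neq0.
rewrite (Rintegral_cos_affine_periods _ (Rad_gt0 i) N_gt0).
  by rewrite !mulr0 addr0; ring.
rewrite /kkv mxE -[_ *+ (m i * 2)]mulr_natr -[pi *+ 2]mulr_natr natrM.
by field; rewrite gt_eqF.
Qed.
End ModeIntegral.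

Lemma split_lshift p q (i : 'I_p) : fintype.split (lshift q i) = inl i.
Proof. exact: (unsplitK (inl i : 'I_p + 'I_q)). Qed.

Lemma split_rshift p q (i : 'I_q) : fintype.split (rshift p i) = inr i.
Proof. exact: (unsplitK (inr i : 'I_p + 'I_q)). Qed.

Lemma derive_line (R : numFieldType) (V W : normedModType R) (f : V -> W) (y e : V) :
  derive f y e = derive (fun h : R => f (h *: e + y)) 0 1.
Proof.
rewrite /derive; do 2 f_equal; apply: funext => h /=.
by rewrite scale0r add0r addr0 [h *: 1]mulr1.
Qed.

Lemma lagrange_identity (R : comNzRingType) n (b v : 'I_n -> R) :
  \sum_i \sum_j (b j * v i - b i * v j) ^+ 2 =
  2 * ((\sum_i v i ^+ 2) * (\sum_i b i ^+ 2) - (\sum_i b i * v i) ^+ 2).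
Proof.
have sqrE i j : (b j * v i - b i * v j) ^+ 2 =
    v i ^+ 2 * b j ^+ 2 + v j ^+ 2 * b i ^+ 2 - 2 * ((b i * v i) * (b j * v j)).
  by ring.
under eq_bigr do under eq_bigr do rewrite sqrE.
have sum_vb : \sum_i \sum_j v i ^+ 2 * b j ^+ 2 = (\sum_i v i ^+ 2) * \sum_i b i ^+ 2.
  by rewrite big_distrlr.
have sum_bv : \sum_i \sum_j v j ^+ 2 * b i ^+ 2 = (\sum_i v i ^+ 2) * \sum_i b i ^+ 2.
  by rewrite exchange_big.
have sum_cross : \sum_i \sum_j 2 * ((b i * v i) * (b j * v j)) =
    2 * (\sum_i b i * v i) ^+ 2.
  by rewrite expr2 big_distrlr mulr_sumr; apply: eq_bigr => i _; rewrite mulr_sumr.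
under eq_bigr do rewrite sumrB big_split.
by rewrite sumrB big_split /= sum_vb sum_bv sum_cross; ring.
Qed.

Lemma mass_matrix_qform (R : realType) n (v b : 'rV[R]_n) :
  (b *m mass_matrix v *m b^T) 0 0 =
  vnorm2 v * (\sum_i b 0 i ^+ 2) - (\sum_i b 0 i * v 0 i) ^+ 2.
Proof.
rewrite /mass_matrix mulmxBr mulmxBl mul_mx_scalar -scalemxAl !mulmxA.
rewrite -(mulmxA (b *m v^T)) !mxE big_ord1 !mxE; congr (_ * _ - _).
  by apply: eq_bigr => i _; rewrite !mxE expr2.
by rewrite expr2; congr (_ * _); apply: eq_bigr => i _; rewrite !mxE // mulrC.
Qed.

Section KKMode.
Variables (R : realType) (n d : nat) (Rad : 'I_n -> R) (m : 'I_n -> nat).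
Variables (a : 'I_d -> 'rV[R]_4) (b : 'I_d -> 'rV[R]_n).
Let v := kkv Rad m.
Let th := theta Rad m.
Let s := Num.sqrt (2 / Pvol Rad).
Let A := kk_field Rad m a b.

Lemma eta_rshift (i : 'I_n) : Defs.eta R (rshift 4 i) = -1.
Proof. by []. Qed.

Lemma partial_lshift mu (f : 'rV[R]_n -> R) y : partial (lshift n mu) f y = 0.
Proof. by rewrite /partial split_lshift. Qed.

Lemma partial_cos_theta i C y :
  partial (rshift 4 i) (fun y => C * cos (th y)) y = - (C * sin (th y) * v 0 i).
Proof.
rewrite /partial split_rshift derive_line.
under eq_fun do rewrite /th theta_shift [_ * v 0 i]mulrC.
rewrite -[fun h => _]/(C \*: fun h => cos (th y + v 0 i * h)).
have [_ ->] := is_deriveZ C (is_derive_cos_affine (th y) (v 0 i) 0).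
by rewrite mulr0 addr0 -[C *: _]/(C * _) mulNr mulrN mulrA.
Qed.

Lemma partial_sin_theta i C y :
  partial (rshift 4 i) (fun y => C * sin (th y)) y = C * cos (th y) * v 0 i.
Proof.
rewrite /partial split_rshift derive_line.
under eq_fun do rewrite /th theta_shift [_ * v 0 i]mulrC.
rewrite -[fun h => _]/(C \*: fun h => sin (th y + v 0 i * h)).
have [_ ->] := is_deriveZ C (is_derive_sin_affine (th y) (v 0 i) 0).
by rewrite mulr0 addr0 -[C *: _]/(C * _) mulrA.
Qed.

Lemma kk_field_lshift c mu : A c (lshift n mu) = fun y => s * a c 0 mu * cos (th y).
Proof. by apply: funext => y; rewrite /A /kk_field split_lshift. Qed.

Lemma kk_field_rshift c i : A c (rshift 4 i) = fun y => s * b c 0 i * sin (th y).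
Proof. by apply: funext => y; rewrite /A /kk_field split_rshift. Qed.

Lemma fstrength_ll c mu nu y : fstrength (A c) (lshift n mu) (lshift n nu) y = 0.
Proof. by rewrite /fstrength !partial_lshift subrr. Qed.

Lemma fstrength_lr c mu j y :
  fstrength (A c) (lshift n mu) (rshift 4 j) y = s * a c 0 mu * sin (th y) * v 0 j.
Proof. by rewrite /fstrength partial_lshift kk_field_lshift partial_cos_theta sub0r opprK. Qed.

Lemma fstrength_rl c i nu y :
  fstrength (A c) (rshift 4 i) (lshift n nu) y = - (s * a c 0 nu * sin (th y) * v 0 i).
Proof. by rewrite /fstrength partial_lshift kk_field_lshift partial_cos_theta subr0. Qed.

Lemma fstrength_rr c i j y :
  fstrength (A c) (rshift 4 i) (rshift 4 j) y =
  s * cos (th y) * (b c 0 j * v 0 i - b c 0 i * v 0 j).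
Proof. by rewrite /fstrength !kk_field_rshift !partial_sin_theta; ring. Qed.

(* Only [F_{mu,4+j}] and [F_{4+i,4+j}] survive: the first gives the vector
   mass term, the second, by Lagrange's identity, the scalar mass matrix. *)
Lemma sum_eta_fstrength_kk c y :
  \sum_(M < 4 + n) \sum_(N < 4 + n) Defs.eta R M * Defs.eta R N * fstrength (A c) M N y ^+ 2 =
  - 2 * s ^+ 2 * sin (th y) ^+ 2 * vnorm2 v * mink n (a c) +
  2 * s ^+ 2 * cos (th y) ^+ 2 * (b c *m mass_matrix v *m (b c)^T) 0 0.
Proof.
have row_lshift mu : \sum_(N < 4 + n) Defs.eta R (lshift n mu) * Defs.eta R N *
    fstrength (A c) (lshift n mu) N y ^+ 2 =
    - (Defs.eta R (lshift n mu) * a c 0 mu ^+ 2) * s ^+ 2 * sin (th y) ^+ 2 * vnorm2 v.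
  rewrite big_split_ord /= big1 ?add0r => [|nu _]; last by rewrite fstrength_ll expr0n mulr0.
  under eq_bigr do rewrite fstrength_lr eta_rshift.
  by rewrite /vnorm2 !mulr_sumr; apply: eq_bigr => j _; ring.
have row_rshift i : \sum_(N < 4 + n) Defs.eta R (rshift 4 i) * Defs.eta R N *
    fstrength (A c) (rshift 4 i) N y ^+ 2 =
    - (s ^+ 2 * sin (th y) ^+ 2 * v 0 i ^+ 2) * mink n (a c) +
    s ^+ 2 * cos (th y) ^+ 2 * \sum_j (b c 0 j * v 0 i - b c 0 i * v 0 j) ^+ 2.
  rewrite big_split_ord /= /mink !mulr_sumr; congr (_ + _); apply: eq_bigr => j _.
    by rewrite fstrength_rl eta_rshift; ring.
  by rewrite fstrength_rr !eta_rshift; ring.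
rewrite big_split_ord /=; under eq_bigr do rewrite row_lshift.
under [X in _ + X]eq_bigr do rewrite row_rshift.
rewrite big_split /= -!mulr_suml !sumrN -!mulr_sumr.
rewrite (lagrange_identity (b c 0) (v 0)) mass_matrix_qform /mink /vnorm2.
ring.
Qed.
End KKMode.

Section KKModeMass.
Variables (R : realType) (n d : nat) (Rad : 'I_n -> R) (m : 'I_n -> nat).
Variables (a : 'I_d -> 'rV[R]_4) (b : 'I_d -> 'rV[R]_n).
Let v := kkv Rad m.
Let s := Num.sqrt (2 / Pvol Rad).
Let vector_mass := vnorm2 v * \sum_c mink n (a c).
Let scalar_mass := \sum_c (b c *m mass_matrix v *m (b c)^T) 0 0.

Lemma Ldensity_kk_field y :
  Ldensity (kk_field Rad m a b) y =
  s ^+ 2 / 4 * (vector_mass - scalar_mass) +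
  - (s ^+ 2 / 4) * (vector_mass + scalar_mass) * cos (2 * theta Rad m y).
Proof.
rewrite /Ldensity; under eq_bigr do rewrite sum_eta_fstrength_kk.
rewrite big_split /= -!mulr_sumr.
have cos2E : cos (2 * theta Rad m y) = cos (theta Rad m y) ^+ 2 *+ 2 - 1.
  by rewrite -cos_mulr2n mulr_natl.
by rewrite cos2E sin2cos2 -mulr_natl /vector_mass /scalar_mass /s /v; ring.
Qed.

Hypothesis Rad_gt0 : forall i, 0 < Rad i.
Hypothesis m_neq0 : exists i, m i != 0%N.

Lemma Lmass_mode_kk : Lmass_mode Rad m a b =
  \sum_(c < d) ((1 / 2) * vnorm2 v * mink n (a c)
     - (1 / 2) * (b c *m mass_matrix v *m (b c)^T) 0 0).
Proof.
rewrite /Lmass_mode /box_int (funext Ldensity_kk_field).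
rewrite box_int_seq_cst_add_cos2theta //.
have -> : all (fun i => m i == 0%N) (enum 'I_n) = false.
  by case: m_neq0 => i mi; apply/negbTE/allPn; exists i; rewrite ?mem_enum.
have P_gt0 : 0 < Pvol Rad by apply: prodr_gt0 => i _.
have s2E : s ^+ 2 = 2 / Pvol Rad by rewrite sqr_sqrtr // divr_ge0 // ltW.
rewrite big_enum -/(Pvol Rad) mulr0 addr0 s2E sumrB -!mulr_sumr.
by rewrite /vector_mass /scalar_mass; field; rewrite gt_eqF.
Qed.
End KKModeMass.

Lemma box_int_seq0 (R : realType) n (Rad : 'I_n -> R) s (y : 'rV[R]_n) :
  box_int_seq Rad s (fun=> 0) y = 0.
Proof.
elim: s y => //= i s IHs y; under eq_Rintegral do rewrite IHs.
by rewrite Rintegral_cst ?mul0r.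
Qed.

Lemma partial_cst (R : realType) n (M : 'I_(4 + n)) (k : R) (y : 'rV[R]_n) :
  partial M (fun=> k) y = 0.
Proof. by rewrite /partial; case: fintype.split => // i; exact: derive_cst. Qed.

Lemma Lmass_zero_eq0 (R : realType) n d (Rad : 'I_n -> R) (a : 'I_d -> 'rV[R]_4) :
  Lmass_zero Rad a = 0.
Proof.
have fstrength0 c M N y : fstrength (zero_field Rad a c) M N y = 0.
  have cstE K : zero_field Rad a c K = fun=> zero_field Rad a c K 0 by [].
  by rewrite /fstrength (cstE N) (cstE M) !partial_cst subrr.
rewrite /Lmass_zero /box_int.
have -> : Ldensity (zero_field Rad a) = fun=> 0.
  apply: funext => y; rewrite /Ldensity big1 ?mulr0 // => c _.
  by rewrite big1 // => M _; rewrite big1 // => N _; rewrite fstrength0 expr0n mulr0.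
exact: box_int_seq0.
Qed.

Lemma vnorm2_kkv (R : realType) n (Rad : 'I_n -> R) (m : 'I_n -> nat) :
  vnorm2 (kkv Rad m) = \sum_(i < n) (2 * pi * (m i)%:R / Rad i) ^+ 2.
Proof. by apply: eq_bigr => i _; rewrite mxE. Qed.

Lemma vnorm2_kkv_gt0 (R : realType) n (Rad : 'I_n -> R) (m : 'I_n -> nat) :
  (forall i, 0 < Rad i) -> (exists i, m i != 0%N) -> 0 < vnorm2 (kkv Rad m).
Proof.
move=> Rad_gt0 [i mi_neq0]; rewrite vnorm2_kkv (bigD1 i) //=.
have vi_gt0 : 0 < 2 * pi * (m i)%:R / Rad i.
  by rewrite divr_gt0 ?mulr_gt0 ?pi_gt0 ?ltr0n ?lt0n.
by rewrite ltr_pwDl ?exprn_gt0 ?sumr_ge0 // => j _; exact: sqr_ge0.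
Qed.

Section Towers.
Variable n : nat.

Lemma card_nonempty_subsets : #|[set S : {set 'I_n} | S != finset.set0]| = (2 ^ n - 1)%N.
Proof.
rewrite (_ : [set S : {set 'I_n} | S != finset.set0] = ~: [set finset.set0]).
  by rewrite cardsC1 -cardsT -powersetT card_powerset cardsT card_ord subn1.
by apply/setP => S; rewrite !inE.
Qed.

Lemma in_tower_indicator (S : {set 'I_n}) : in_tower S (fun i => nat_of_bool (i \in S)).
Proof. by apply/forallP => i; case: (i \in S). Qed.

Lemma in_tower_support (m : 'I_n -> nat) (S : {set 'I_n}) :
  in_tower S m <-> S = [set i | m i != 0%N].
Proof.
split=> [/forallP towerS|->]; last by apply/forallP => i; rewrite inE.
by apply/setP => i; rewrite inE (eqP (towerS i)).
Qed.

Lemma in_tower_unique (m : 'I_n -> nat) : (exists i, m i != 0%N) ->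
  exists! S : {set 'I_n}, S != finset.set0 /\ in_tower S m.
Proof.
move=> [i mi_neq0]; exists [set i | m i != 0%N]; split=> [|S [_ /in_tower_support //]].
split; last exact/in_tower_support.
by apply/set0Pn; exists i; rewrite inE.
Qed.
End Towers.

Theorem mainTheorem2 (R : realType) (n d : nat) (Rad : 'I_n -> R) :
  (0 < n)%N -> (forall i, 0 < Rad i) ->
  (forall a : 'I_d -> 'rV[R]_4, Lmass_zero Rad a = 0) /\
  (forall m : 'I_n -> nat, (exists i, m i != 0%N) ->
     let v := kkv Rad m in
     let M := mass_matrix v in
     (forall (a : 'I_d -> 'rV[R]_4) (b : 'I_d -> 'rV[R]_n),
        Lmass_mode Rad m a b =
        \sum_(c < d) ((1 / 2) * vnorm2 v * mink n (a c)
                      - (1 / 2) * (b c *m M *m (b c)^T) 0 0)) /\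
     vnorm2 v = \sum_(i < n) (2 * pi * (m i)%:R / Rad i) ^+ 2 /\
     0 < vnorm2 v /\
     M^T = M /\
     M *m v^T = 0 /\ v != 0 /\
     char_poly M = 'X * ('X - (vnorm2 v)%:P) ^+ (n - 1) /\
     \rank (eigenspace M 0) = 1%N /\
     \rank (eigenspace M (vnorm2 v)) = (n - 1)%N) /\
  #|[set S : {set 'I_n} | S != finset.set0]| = (2 ^ n - 1)%N /\
  (forall S : {set 'I_n}, S != finset.set0 -> exists m, in_tower S m) /\
  (forall m : 'I_n -> nat, (exists i, m i != 0%N) ->
     exists! S : {set 'I_n}, S != finset.set0 /\ in_tower S m).
Proof.
move=> n_gt0 Rad_gt0; split; first exact: Lmass_zero_eq0.
split; last first.
  split; first exact: card_nonempty_subsets.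
  by split=> [S _|]; [exists (fun i => nat_of_bool (i \in S)); exact: in_tower_indicator
                    | exact: in_tower_unique].
move=> m m_neq0 v M.
have v_gt0 : 0 < vnorm2 v by exact: vnorm2_kkv_gt0.
have norm2_neq0 : vnorm2 v != 0 by rewrite gt_eqF.
do !split.
- by move=> a b; exact: Lmass_mode_kk.
- exact: vnorm2_kkv.
- exact: v_gt0.
- exact: perp_mx_tr.
- exact: perp_mx_mul_tr.
- exact: row_neq0_of_norm2.
- exact: char_poly_perp_mx.
- exact: mxrank_eigenspace_perp_mx0.
- exact: mxrank_eigenspace_perp_mx_norm2.
Qed.
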